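(* Let $G$ be a finite graph and $k=\chi(G)$. If every $k$-coloring of $G^2=G\times G$ is trivial (in particular, if $G$ is trivially power-colorable), then $G$ is tight.
   Context: Graphs are simple and undirected; a $k$-coloring is a proper coloring with colors in $\{0,\dots,k-1\}$. The product $G\times G$ has vertex set $V(G)\times V(G)$, with $(u,v)$ adjacent to $(u',v')$ iff $uu'\in E(G)$ and $vv'\in E(G)$; $G^n$ is the analogous product of $n$ copies. A coloring $\Phi$ of a product $\times_{i\in I}G_i$ is trivial if there exist $i^*\in I$ and a proper coloring $\phi$ of $G_{i^*}$ with $\Phi(v)=\phi(v_{i^*})$ for all $v$. A graph $H$ is trivially power-colorable if for every positive integer $n$, every $\chi(H)$-coloring of $H^n$ is trivial. A $k$-coloring $\phi$ of $G$ is tight if for every vertex $v$ and every color $c\ne\phi(v)$ there is a neighbor $u$ of $v$ with $\phi(u)=c$. $G$ is tight if all of its $\chi(G)$-colorings are tight. *)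

From mathcomp Require Import all_boot.
Set Implicit Arguments. Unset Strict Implicit. Unset Printing Implicit Defensive.

Definition simple_graph (T : finType) (e : rel T) : Prop :=
  symmetric e /\ irreflexive e.

Definition proper_coloring (T : finType) (e : rel T) (k : nat) (f : T -> 'I_k) : Prop :=
  forall u v, e u v -> f u != f v.

Definition colorable (T : finType) (e : rel T) (k : nat) : bool :=
  [exists f : {ffun T -> 'I_k}, [forall u, forall v, e u v ==> (f u != f v)]].

(* Auxiliary predicate that always has the witness #|T| (so that ex_minn
   applies); for irreflexive e, colorable e k holds for k = #|T| anyway,
   so the minimum is the chromatic number. *)
Definition colorable_or_big (T : finType) (e : rel T) (k : nat) : bool :=
  colorable e k || (#|T| <= k).

Lemma colorable_or_big_ex (T : finType) (e : rel T) :
  exists k, colorable_or_big e k.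
Proof. by exists #|T|; rewrite /colorable_or_big leqnn orbT. Qed.

Definition chi (T : finType) (e : rel T) : nat := ex_minn (colorable_or_big_ex e).

Definition prod_rel (T : finType) (e : rel T) : rel (T * T)%type :=
  fun x y => e x.1 y.1 && e x.2 y.2.

Definition trivial_coloring2 (T : finType) (e : rel T) (k : nat)
    (F : (T * T)%type -> 'I_k) : Prop :=
  exists phi : T -> 'I_k, proper_coloring e phi /\
    ((forall x, F x = phi x.1) \/ (forall x, F x = phi x.2)).

Definition tight_coloring (T : finType) (e : rel T) (k : nat) (phi : T -> 'I_k) : Prop :=
  forall (v : T) (c : 'I_k), c != phi v -> exists u, e v u /\ phi u = c.

Definition tight (T : finType) (e : rel T) : Prop :=
  forall phi : T -> 'I_(chi e), proper_coloring e phi -> tight_coloring e phi.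

From mathcomp Require Import all_boot.

Set Implicit Arguments.
Unset Strict Implicit.
Unset Printing Implicit Defensive.

(* Let phi be a chi(G)-coloring that is not tight: some vertex v
   sees no neighbour of a colour c <> phi v.  Recolouring v with c gives a
   second proper coloring phi' which is moreover "compatible" with phi
   (phi' x <> phi x' along every edge).  Two compatible proper colorings can be
   glued into a coloring of G x G that uses phi' on the rows y = v and phi on
   the other rows.  If this coloring is trivial it factors through the first
   coordinate, forcing phi' = phi (absurd at v), or through the second one,
   forcing phi to be constant (absurd as soon as G has an edge).  Finally G
   has an edge because c <> phi v provides two colours, so chi(G) >= 2. *)

Section Colorings.

Variables (T : finType) (e : rel T).

Lemma chi_edgeless : (forall a b, ~~ e a b) -> chi e <= 1.
Proof.
move=> edgeless; rewrite /chi; case: ex_minnP => m _; apply.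
apply/orP; left; apply/existsP; exists [ffun=> ord0].
by apply/forallP=> u; apply/forallP=> w; rewrite (negbTE (edgeless u w)).
Qed.

Lemma edge_of_two_colors (c d : 'I_(chi e)) : c != d -> exists a b, e a b.
Proof.
move=> cd; case: (boolP [exists a, exists b, e a b]).
  by case/existsP=> a /existsP[b eab]; exists a, b.
move/existsPn=> edgeless; have chi_le1 : chi e <= 1.
  by apply: chi_edgeless => a b; have /existsPn := edgeless a; apply.
move: cd (ltn_ord c) (ltn_ord d); case: (chi e) chi_le1 c d => [|[|]] //= _.
by move=> [[|]//] ? [[|]//] ?; rewrite eqxx.
Qed.

Hypothesis e_sym : symmetric e.

Definition glue (k : nat) (P : pred T) (f g : T -> 'I_k) (p : T * T) : 'I_k :=
  if P p.2 then f p.1 else g p.1.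

Lemma glue_proper (k : nat) (P : pred T) (f g : T -> 'I_k) :
  proper_coloring e f -> proper_coloring e g ->
  (forall x x', e x x' -> f x != g x') ->
  proper_coloring (prod_rel e) (glue P f g).
Proof.
move=> f_ok g_ok fg [x y] [x' y'] /andP[/= exx' _]; rewrite /glue /=.
case: (P y); case: (P y'); [exact: f_ok | exact: fg | | exact: g_ok].
by rewrite eq_sym; apply: fg; rewrite e_sym.
Qed.

Lemma trivial_glue_eq (k : nat) (P : pred T) (f g : T -> 'I_k) (y1 y2 : T) :
  proper_coloring e f -> P y1 -> ~~ P y2 -> (exists a b, e a b) ->
  trivial_coloring2 e (glue P f g) -> f =1 g.
Proof.
move=> f_ok Py1 nPy2 [a [b eab]] [psi [_ [by_row | by_col]]] x.
  have := by_row (x, y1); have := by_row (x, y2).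
  by rewrite /glue /= Py1 (negbTE nPy2) => -> ->.
have := f_ok a b eab; have := by_col (a, y1); have := by_col (b, y1).
by rewrite /glue /= Py1 => -> ->; rewrite eqxx.
Qed.

Hypothesis e_irr : irreflexive e.

Definition recolor (k : nat) (phi : T -> 'I_k) (v : T) (c : 'I_k) (x : T) : 'I_k :=
  if x == v then c else phi x.

Lemma recolor_compatible (k : nat) (phi : T -> 'I_k) (v : T) (c : 'I_k) :
  proper_coloring e phi -> (forall u, e v u -> phi u != c) ->
  forall x x', e x x' -> recolor phi v c x != phi x'.
Proof.
move=> phi_ok c_free x x' exx'; rewrite /recolor.
case: (eqVneq x v) exx' => [-> evx' | _ exx']; last exact: phi_ok.
by rewrite eq_sym; apply: c_free.
Qed.

Lemma recolor_proper (k : nat) (phi : T -> 'I_k) (v : T) (c : 'I_k) :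
  proper_coloring e phi -> (forall u, e v u -> phi u != c) ->
  proper_coloring e (recolor phi v c).
Proof.
move=> phi_ok c_free x x' exx'; rewrite {2}/recolor.
case: (eqVneq x' v) => [x'v | _]; last exact: recolor_compatible.
have xv : x != v by apply: contraTneq exx' => ->; rewrite -x'v e_irr.
by rewrite /recolor (negbTE xv); apply: c_free; rewrite e_sym -x'v.
Qed.

End Colorings.

Theorem mainTheorem5 (T : finType) (e : rel T) :
  simple_graph e ->
  (forall F : (T * T)%type -> 'I_(chi e),
      proper_coloring (prod_rel e) F -> trivial_coloring2 e F) ->
  tight e.
Proof.
move=> [e_sym e_irr] trivial_all phi phi_ok v c c_new.
case: (boolP [exists u, e v u && (phi u == c)]).
  by case/existsP=> u /andP[evu /eqP phi_u]; exists u.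
move/existsPn=> no_c; exfalso.
have c_free u : e v u -> phi u != c by move=> evu; have := no_c u; rewrite evu.
have edge := edge_of_two_colors c_new.
have [y yv] : exists y, y != v.
  have [a [b eab]] := edge; case: (eqVneq a v) => [av | ?]; last by exists a.
  by exists b; apply: contraTneq eab => ->; rewrite av e_irr.
pose phi' := recolor phi v c.
have phi'_ok : proper_coloring e phi' := recolor_proper e_sym e_irr phi_ok c_free.
have F_ok := glue_proper e_sym (pred1 v) phi'_ok phi_ok
  (recolor_compatible phi_ok c_free).
have := trivial_glue_eq (P := pred1 v) phi'_ok (eqxx v) yv edge
  (trivial_all _ F_ok) v.
by rewrite /phi' /recolor eqxx => c_eq; rewrite c_eq eqxx in c_new.
Qed.
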